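(* Let $\Gamma$ be a locally finite vertex-transitive weighted graph with distinguished vertex $e$. If vertices $x,y$ satisfy $\mathbb{P}_e[T_x<\infty]>\mathbb{P}_e[T_y<\infty]$, then they also satisfy $\mathbb{P}_e[\,T_x<T_y\mid\min\{T_x,T_y\}<\infty\,]>1/2$. If the random walk on $\Gamma$ is transient then these two conditions are equivalent.
   Context: Weighted graph: undirected, no loops or multiple edges, weights $\omega_{xy}=\omega_{yx}>0$, $\deg x=\sum_{y\sim x}\omega_{xy}$; vertex-transitive means the group of weight-preserving automorphisms acts transitively on vertices. $(X_t)$ is the random walk stepping from $z$ to neighbour $w$ with probability $\omega_{zw}/\deg z$; $\mathbb{P}_g$ denotes its law with $X_0=g$; $T_z=\inf\{t\ge0:X_t=z\}$. The walk is transient if the probability of ever returning (at a time $t\ge1$) to the starting vertex is less than $1$. *)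

From mathcomp Require Import all_boot all_order all_algebra.
From mathcomp Require Import all_classical all_reals all_analysis.
Set Implicit Arguments. Unset Strict Implicit. Unset Printing Implicit Defensive.
Import Order.TTheory GRing.Theory Num.Theory.
Local Open Scope ring_scope.

Section WGraph.
Variables (R : realType) (V : eqType).

(* A locally finite weighted graph on vertex type V: [nbr x] is the (finite)
   list of neighbours of x, [w x y] the weight of the edge xy. *)
Definition is_lf_wgraph (nbr : V -> seq V) (w : V -> V -> R) : Prop :=
  [/\ forall x, uniq (nbr x),
      forall x, x \notin nbr x,
      forall x y, (y \in nbr x) = (x \in nbr y)
    & forall x y, y \in nbr x -> w x y = w y x /\ 0 < w x y].

Definition vertex_transitive (nbr : V -> seq V) (w : V -> V -> R) : Prop :=
  forall u v, exists phi : V -> V,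
    [/\ bijective phi, phi u = v,
        forall x y, (phi y \in nbr (phi x)) = (y \in nbr x)
      & forall x y, y \in nbr x -> w (phi x) (phi y) = w x y].

Definition deg (nbr : V -> seq V) (w : V -> V -> R) (x : V) : R :=
  \sum_(y <- nbr x) w x y.

Definition pstep (nbr : V -> seq V) (w : V -> V -> R) (z y : V) : R :=
  w z y / deg nbr w z.

(* hitp A B n z = P_z[ the walk is in A at time n, not in A at times < n,
                       and not in B at times 0..n ]  *)
Fixpoint hitp (nbr : V -> seq V) (w : V -> V -> R) (A B : pred V) (n : nat)
  (z : V) : R :=
  match n with
  | 0 => ((z \in A) && (z \notin B))%:R
  | n'.+1 => if (z \in A) || (z \in B) then 0
             else \sum_(y <- nbr z) pstep nbr w z y * hitp nbr w A B n' y
  end.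

(* P_g[T_x < oo] *)
Definition Phit nbr w (g x : V) : R :=
  \big[+%R/0%R]_(0 <= n <oo) hitp nbr w (pred1 x) pred0 n g.

(* P_g[T_x < T_y]  (the event includes T_x < oo) *)
Definition Pbefore nbr w (g x y : V) : R :=
  \big[+%R/0%R]_(0 <= n <oo) hitp nbr w (pred1 x) (pred1 y) n g.

(* P_g[min(T_x, T_y) < oo] = P_g[T_{x,y} < oo] *)
Definition Pmin nbr w (g x y : V) : R :=
  \big[+%R/0%R]_(0 <= n <oo) hitp nbr w (pred2 x y) pred0 n g.

(* P_g[T_x < T_y | min(T_x,T_y) < oo]; since {T_x < T_y} is contained in
   {min(T_x,T_y) < oo}, the intersection is {T_x < T_y}. *)
Definition Pcond nbr w (g x y : V) : R :=
  Pbefore nbr w g x y / Pmin nbr w g x y.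

(* probability of ever returning to g at a time t >= 1:
   sum over n of P_g[first return at time n+1] *)
Definition Preturn nbr w (g : V) : R :=
  \big[+%R/0%R]_(0 <= n <oo) \sum_(y <- nbr g) pstep nbr w g y * hitp nbr w (pred1 g) pred0 n y.

Definition transient nbr w (g : V) : Prop := Preturn nbr w g < 1.

End WGraph.

From mathcomp Require Import all_boot all_order all_algebra.
From mathcomp Require Import all_classical all_reals all_analysis.
From mathcomp Require Import zify lra.
Set Implicit Arguments. Unset Strict Implicit. Unset Printing Implicit Defensive.
Import Order.TTheory GRing.Theory Num.Theory numFieldNormedType.Exports.
Local Open Scope classical_set_scope.
Local Open Scope ring_scope.

(* Write a = P_e[T_x < T_y], b = P_e[T_y < T_x] and h = P_x[T_y < oo].  The
   walk is reversible and, by transitivity, its return probabilities p_n(u, u)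
   do not depend on u; decomposing p_n(x, y) = p_n(y, x) at the first visit to
   the target then shows h = P_y[T_x < oo].  Decomposing at the first visit to
   {x, y} gives P_e[T_x < oo] = a + b h and P_e[T_y < oo] = b + a h, whose
   difference is (a - b)(1 - h), while the conditional probability is
   a / (a + b).  Finally a walk from x that visits y and then comes back shows
   h^2 <= P_x[return], so h < 1 when the walk is transient. *)

Section NonnegativeSeries.
Variable R : realType.
Implicit Types (a f g : R ^nat).

Lemma nneg_series_ub_cvg f M : (forall n, 0 <= f n) ->
  (forall N, series f N <= M) -> cvgn (series f).
Proof.
move=> f0 fM; apply: nondecreasing_is_cvgn; first exact: nondecreasing_series.
by exists M => _ [N _ <-].
Qed.

Lemma lim_series_le f M : cvgn (series f) -> (forall N, series f N <= M) ->
  limn (series f) <= M.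
Proof. by move=> cf fM; apply: limr_le => //; apply: nearW. Qed.

Lemma series_le_lim f N : (forall n, 0 <= f n) -> cvgn (series f) ->
  series f N <= limn (series f).
Proof. by move=> f0 cf; apply: (nondecreasing_cvgn_le _ cf); exact: nondecreasing_series. Qed.

Lemma lim_series_ge0 f : (forall n, 0 <= f n) -> cvgn (series f) ->
  0 <= limn (series f).
Proof. by move=> f0 cf; apply: le_trans (series_le_lim 0 f0 cf); rewrite /series /= big_geq. Qed.

Lemma cvg_series_shiftS f : cvgn (series f) ->
  series (fun n => f n.+1) @ \oo --> limn (series f) - f 0%N.
Proof.
move=> cf; have -> : series (fun n => f n.+1) = (fun N => series f N.+1 - f 0%N).
  by apply/funext => N; rewrite /series /= big_nat_recl // addrC addKr.
by apply: cvgB; [rewrite cvg_shiftS | exact: cvg_cst].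
Qed.

Lemma cvg_series_sum (T : Type) (s : seq T) (c : T -> R) (F : T -> R ^nat) :
  (forall t, cvgn (series (F t))) ->
  series (fun n => \sum_(t <- s) c t * F t n) @ \oo -->
    \sum_(t <- s) c t * limn (series (F t)).
Proof.
move=> cF; elim: s => [|t s IH].
  have -> : series (fun n => \sum_(t <- [::]) c t * F t n) = fun=> 0.
    by apply/funext => N; rewrite /series /= big1 // => i _; rewrite big_nil.
  by rewrite big_nil; exact: cvg_cst.
have -> : series (fun n => \sum_(u <- t :: s) c u * F u n) =
    fun N => c t * series (F t) N + series (fun n => \sum_(u <- s) c u * F u n) N.
  apply/funext => N; rewrite /series /= big_distrr -big_split /=.
  by apply: eq_bigr => n _; rewrite big_cons.
by rewrite big_cons; apply: cvgD => //; apply: cvgM => //; exact: cvg_cst.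
Qed.

Definition cauchy_product a f n := \sum_(0 <= k < n.+1) a k * f (n - k)%N.

Lemma series_cauchy_product a f N :
  series (cauchy_product a f) N = \sum_(0 <= k < N) a k * series f (N - k)%N.
Proof.
elim: N => [|N IH]; first by rewrite /series /= !big_geq.
rewrite seriesSr IH /cauchy_product [RHS]big_nat_recr //= [X in _ + X]big_nat_recr //=.
rewrite addrA -big_split /= subnn subSnn; congr (_ + _); last by rewrite /series /= big_nat1.
apply: eq_big_nat => k /andP [_ kN].
by rewrite subSn ?(ltnW kN) // seriesSr mulrDr.
Qed.

Lemma cvg_series_cauchy_product a f :
  (forall n, 0 <= a n) -> (forall n, 0 <= f n) ->
  cvgn (series a) -> cvgn (series f) ->
  series (cauchy_product a f) @ \oo --> limn (series a) * limn (series f).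
Proof.
move=> a0 f0 ca cf.
have series_ge0 g N : (forall n, 0 <= g n) -> 0 <= series g N.
  by move=> g0; apply: sumr_ge0 => k _.
have f_nd : {homo series f : n m / (n <= m)%N >-> n <= m}.
  exact: nondecreasing_series.
have ub N : series (cauchy_product a f) N <= series a N * series f N.
  rewrite series_cauchy_product /series /= big_distrl /=.
  apply: ler_sum_nat => k /andP [_ kN]; apply: ler_wpM2l => //.
  exact/f_nd/leq_subr.
have lb N : series a N * series f N <= series (cauchy_product a f) (N + N)%N.
  rewrite series_cauchy_product /series /= big_distrl /=.
  rewrite (big_cat_nat (leq0n N) (leq_addr N N)) /= -[leLHS]addr0.
  apply: lerD; last by apply: sumr_ge0 => k _; rewrite mulr_ge0 ?series_ge0.
  apply: ler_sum_nat => k /andP [_ kN]; apply: ler_wpM2l => //.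
  by apply: f_nd; lia.
have cp0 n : 0 <= cauchy_product a f n.
  by apply: sumr_ge0 => k _; apply: mulr_ge0.
have cprod : series a * series f @ \oo --> limn (series a) * limn (series f).
  exact: cvgM.
have ccp : cvgn (series (cauchy_product a f)).
  apply: (nneg_series_ub_cvg (M := limn (series a) * limn (series f))) => // N.
  apply: le_trans (ub N) _; apply: ler_pM; rewrite ?series_ge0 //;
  exact: series_le_lim.
suff -> : limn (series a) * limn (series f) = limn (series (cauchy_product a f)) by [].
apply/eqP; rewrite eq_le; apply/andP; split.
  rewrite -(cvg_lim _ cprod) //; apply: limr_le; first exact: (cvgP _ cprod).
  by apply: nearW => N; apply: le_trans (lb N) (series_le_lim _ cp0 ccp).
apply: lim_series_le => // N; apply: le_trans (ub N) _.
by apply: ler_pM; rewrite ?series_ge0 //; exact: series_le_lim.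
Qed.

End NonnegativeSeries.

Lemma half_lt_ratio (R : realFieldType) (a b : R) : 0 <= a -> 0 <= b ->
  (2^-1 < a / (a + b)) = (b < a).
Proof.
move=> a0 b0; have [ab0|ab_neq0] := eqVneq (a + b) 0.
  by rewrite ab0 invr0; apply/idP/idP; lra.
have abp : 0 < a + b by rewrite lt_neqAle eq_sym ab_neq0 addr_ge0.
by rewrite ltr_pdivlMr //; apply/idP/idP; lra.
Qed.

Section RandomWalk.
Variables (R : realType) (V : eqType) (nbr : V -> seq V) (w : V -> V -> R).
Hypothesis lf_w : is_lf_wgraph nbr w.

Local Notation hit := (hitp nbr w).
Local Notation step := (pstep nbr w).
Local Notation deg := (deg nbr w).
Local Notation Phit := (Phit nbr w).
Local Notation Pbefore := (Pbefore nbr w).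
Local Notation Pmin := (Pmin nbr w).

Lemma PhitE g v : Phit g v = limn (series (fun n => hit (pred1 v) pred0 n g)).
Proof. by []. Qed.

Lemma PbeforeE g a b : Pbefore g a b = limn (series (fun n => hit (pred1 a) (pred1 b) n g)).
Proof. by []. Qed.

Lemma PminE g a b : Pmin g a b = limn (series (fun n => hit (pred2 a b) pred0 n g)).
Proof. by []. Qed.

Lemma weight_gt0 z y : y \in nbr z -> 0 < w z y.
Proof. by case: lf_w => _ _ _ h /h []. Qed.

Lemma weightC z y : y \in nbr z -> w z y = w y z.
Proof. by case: lf_w => _ _ _ h /h []. Qed.

Lemma deg_ge0 z : 0 <= deg z.
Proof. by rewrite /deg big_seq; apply: sumr_ge0 => y /weight_gt0/ltW. Qed.

Lemma pstep_ge0 z y : y \in nbr z -> 0 <= step z y.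
Proof. by move=> /weight_gt0/ltW w0; rewrite divr_ge0 ?deg_ge0. Qed.

(* Only [<=]: an isolated vertex has degree 0, and [0 / 0 = 0]. *)
Lemma sum_pstep_le1 z : \sum_(y <- nbr z) step z y <= 1.
Proof.
rewrite /pstep -big_distrl /=; change (deg z / deg z <= 1).
by have [->|d0] := eqVneq (deg z) 0; rewrite ?mul0r ?mulfV.
Qed.

Lemma hitp_ge0 A B n z : 0 <= hit A B n z.
Proof.
elim: n z => [|n IH] z /=; first by rewrite ler0n.
case: ifP => _ //; rewrite big_seq; apply: sumr_ge0 => y yz.
by rewrite mulr_ge0 ?pstep_ge0 ?IH.
Qed.

Lemma hitpS A B n z : hit A B n.+1 z =
  if (z \in A) || (z \in B) then 0 else \sum_(y <- nbr z) step z y * hit A B n y.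
Proof. by []. Qed.

Lemma series_hitp_le1 A B z N : series (fun n => hit A B n z) N <= 1.
Proof.
elim: N z => [|N IH] z; first by rewrite /series /= big_geq.
rewrite /series /= big_nat_recl // [hit A B 0 z]/=.
case hz: ((z \in A) || (z \in B)).
  rewrite big1 ?addr0; last by move=> i _; rewrite hitpS hz.
  by rewrite lern1 leq_b1.
have -> : (z \in A) && (z \notin B) = false.
  by move/negbT: hz; rewrite negb_or => /andP[/negbTE-> _].
rewrite add0r; under eq_bigr do rewrite hitpS hz.
rewrite exchange_big /=; apply: le_trans (sum_pstep_le1 z).
rewrite big_seq [leRHS]big_seq; apply: ler_sum => y yz.
by rewrite -big_distrr /= ler_piMr ?pstep_ge0 ?IH.
Qed.

Lemma cvg_series_hitp A B z : cvgn (series (fun n => hit A B n z)).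
Proof.
exact: nneg_series_ub_cvg (hitp_ge0 A B ^~ z) (series_hitp_le1 A B z).
Qed.

Section Automorphism.
Variable phi : V -> V.
Hypotheses (phi_bij : bijective phi)
  (phi_nbr : forall x y, (phi y \in nbr (phi x)) = (y \in nbr x))
  (phi_w : forall x y, y \in nbr x -> w (phi x) (phi y) = w x y).

Lemma perm_nbr_auto z : perm_eq (nbr (phi z)) (map phi (nbr z)).
Proof.
case: lf_w => nbr_uniq _ _ _; have [psi phiK psiK] := phi_bij.
apply: uniq_perm; rewrite ?nbr_uniq ?map_inj_uniq //; first exact: can_inj phiK.
by move=> t; rewrite -[t]psiK phi_nbr mem_map //; exact: can_inj phiK.
Qed.

Lemma deg_auto z : deg (phi z) = deg z.
Proof.
rewrite /deg (perm_big _ (perm_nbr_auto z)) big_map big_seq [RHS]big_seq.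
by apply: eq_bigr => t; exact: phi_w.
Qed.

Lemma sum_pstep_auto z (F : V -> R) :
  \sum_(t <- nbr (phi z)) step (phi z) t * F t =
  \sum_(t <- nbr z) step z t * F (phi t).
Proof.
rewrite (perm_big _ (perm_nbr_auto z)) big_map big_seq [RHS]big_seq.
by apply: eq_bigr => t tz; rewrite /pstep phi_w // deg_auto.
Qed.

Lemma hitp_auto A B A' B' :
  (forall v, (phi v \in A) = (v \in A')) -> (forall v, (phi v \in B) = (v \in B')) ->
  forall n z, hit A B n (phi z) = hit A' B' n z.
Proof.
move=> phiA phiB; elim=> [|n IH] z /=; first by rewrite phiA phiB.
rewrite phiA phiB; case: ifP => // _.
by rewrite sum_pstep_auto; apply: eq_bigr => t _; rewrite IH.
Qed.

End Automorphism.

Lemma hitp_avoided A B n z : z \in B -> hit A B n z = 0.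
Proof. by case: n => [|n] zB /=; rewrite zB ?andbF ?orbT. Qed.

Lemma hitp_target A B n z : z \in A -> hit A B n.+1 z = 0.
Proof. by move=> zA; rewrite hitpS zA. Qed.

Lemma hitp_pred1_self x n z : hit (pred1 x) (pred1 x) n z = 0.
Proof.
elim: n z => [|n IH] z; first by rewrite /= andbN.
by rewrite hitpS; case: ifP => // _; rewrite big1 // => t _; rewrite IH mulr0.
Qed.

Section TwoTargets.
Variables x y : V.
Hypothesis xy : x != y.

Lemma hitp_pred2 n z : hit (pred2 x y) pred0 n z =
  hit (pred1 x) (pred1 y) n z + hit (pred1 y) (pred1 x) n z.
Proof.
elim: n z => [|n IH] z.
  rewrite /= !inE /= -natrD; have [->|zx] := eqVneq z x; first by rewrite xy andbF.
  by rewrite andbT.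
rewrite !hitpS !inE /= orbF [(z == y) || _]orbC.
case: ifP => _; first by rewrite addr0.
by rewrite -big_split /=; apply: eq_bigr => t _; rewrite IH mulrDr.
Qed.

(* Split {T_x = n} according to whether y is visited before x. *)
Lemma hitp_pred1_split n z : hit (pred1 x) pred0 n z = hit (pred1 x) (pred1 y) n z +
  \sum_(0 <= k < n.+1) hit (pred1 y) (pred1 x) k z * hit (pred1 x) pred0 (n - k) y.
Proof.
elim: n z => [|n IH] z.
  rewrite big_nat1 /= !inE /= [y == x]eq_sym (negbTE xy) /= mulr0 addr0.
  by have [->|zx] := eqVneq z x; rewrite ?xy.
have [->|zx] := eqVneq z x.
  rewrite !hitp_target ?inE // add0r big1 // => k _.
  by rewrite hitp_avoided ?inE // mul0r.
have [->|zy] := eqVneq z y.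
  rewrite (@hitp_avoided (pred1 x) (pred1 y)) ?inE // add0r big_nat_recl // big1 ?addr0.
    by rewrite /= !inE eqxx eq_sym (negbTE xy) /= mul1r.
  by move=> k _; rewrite hitp_target ?inE // mul0r.
have z_x0 : (z \in pred1 x) || (z \in pred0) = false by rewrite !inE (negbTE zx).
have z_xy : (z \in pred1 x) || (z \in pred1 y) = false by rewrite !inE (negbTE zx) (negbTE zy).
have z_yx : (z \in pred1 y) || (z \in pred1 x) = false by rewrite orbC.
rewrite hitpS z_x0 hitpS z_xy big_nat_recl // [hit _ _ 0 z]/= !inE (negbTE zy) /= mul0r add0r.
under [X in _ = _ + X]eq_bigr do rewrite z_yx /= subSS big_distrl /=.
rewrite exchange_big /= -big_split /=; apply: eq_bigr => t _.
rewrite IH mulrDr big_distrr /=; congr (_ + _); apply: eq_bigr => k _; by rewrite mulrA.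
Qed.

Lemma Phit_split z : Phit z x = Pbefore z x y + Pbefore z y x * Phit y x.
Proof.
rewrite !PhitE !PbeforeE; set before := fun u a b n => hit (pred1 a) (pred1 b) n u.
have -> : (fun n => hit (pred1 x) pred0 n z) =
    before z x y + cauchy_product (before z y x) (fun n => hit (pred1 x) pred0 n y).
  by apply/funext => n; rewrite hitp_pred1_split.
apply: cvg_lim => //; rewrite seriesD; apply: cvgD; first exact: cvg_series_hitp.
by apply: cvg_series_cauchy_product => [n|n||]; by [exact: hitp_ge0 | exact: cvg_series_hitp].
Qed.

Lemma Pmin_split z : Pmin z x y = Pbefore z x y + Pbefore z y x.
Proof.
rewrite PminE !PbeforeE; have -> : (fun n => hit (pred2 x y) pred0 n z) =
    (fun n => hit (pred1 x) (pred1 y) n z) + (fun n => hit (pred1 y) (pred1 x) n z).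
  by apply/funext => n; rewrite hitp_pred2.
by apply: cvg_lim => //; rewrite seriesD; apply: cvgD; exact: cvg_series_hitp.
Qed.

End TwoTargets.

Lemma Phit_ge0 g v : 0 <= Phit g v.
Proof. by apply: lim_series_ge0 => [n|]; [exact: hitp_ge0 | exact: cvg_series_hitp]. Qed.

Lemma Phit_le1 g v : Phit g v <= 1.
Proof. by apply: lim_series_le => [|N]; [exact: cvg_series_hitp | exact: series_hitp_le1]. Qed.

Lemma Pbefore_ge0 g a b : 0 <= Pbefore g a b.
Proof. by apply: lim_series_ge0 => [n|]; [exact: hitp_ge0 | exact: cvg_series_hitp]. Qed.

Lemma Pbefore_self g a : Pbefore g a a = 0.
Proof.
rewrite PbeforeE (_ : series _ = fun=> 0); first by apply: cvg_lim => //; exact: cvg_cst.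
by apply/funext => N; rewrite /series /= big1 // => n _; exact: hitp_pred1_self.
Qed.

Lemma Preturn_sum g : Preturn nbr w g = \sum_(t <- nbr g) step g t * Phit t g.
Proof.
under eq_bigr do rewrite PhitE.
by apply: cvg_lim => //; apply: cvg_series_sum => t; exact: cvg_series_hitp.
Qed.

Lemma Phit_step u v : u != v -> Phit u v = \sum_(t <- nbr u) step u t * Phit t v.
Proof.
move=> uv.
have shift := cvg_series_shiftS (cvg_series_hitp (A := pred1 v) (B := pred0) (z := u)).
rewrite [hit _ _ 0 u]/= !inE (negbTE uv) subr0 in shift.
rewrite PhitE -(cvg_lim _ shift) //; apply: cvg_lim => //.
have u_v0 : (u \in pred1 v) || (u \in pred0) = false by rewrite !inE (negbTE uv).
under eq_fun do rewrite hitpS u_v0.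
under eq_bigr do rewrite PhitE.
by apply: cvg_series_sum => t; exact: cvg_series_hitp.
Qed.

Hypothesis vt_w : vertex_transitive nbr w.

Lemma deg_transitive u v : deg u = deg v.
Proof. by have [phi [phi_bij <- phi_nbr phi_w]] := vt_w v u; rewrite deg_auto. Qed.

Lemma pstepC z t : t \in nbr z -> step z t = step t z.
Proof. by move=> tz; rewrite /pstep weightC // (deg_transitive z t). Qed.

Fixpoint ptrans n u v : R :=
  if n is n'.+1 then \sum_(t <- nbr u) step u t * ptrans n' t v else (u == v)%:R.

Lemma sum_mul_eq1 (s : seq V) (F : V -> R) v : uniq s ->
  \sum_(t <- s) F t * (t == v)%:R = (v \in s)%:R * F v.
Proof.
elim: s => [|x s IH]; first by rewrite big_nil mul0r.
rewrite /= => /andP [xs us]; rewrite big_cons IH // in_cons.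
have [<-|xv] := eqVneq x v; last by rewrite mulr0 add0r.
by rewrite (negbTE xs) /= mulr1 mul0r addr0 mul1r.
Qed.

Lemma ptransSr n u v : ptrans n.+1 u v = \sum_(t <- nbr v) ptrans n u t * step t v.
Proof.
case: lf_w => nbr_uniq _ nbr_sym _; elim: n u => [|n IH] u.
  rewrite /= sum_mul_eq1 //; under eq_bigr do rewrite eq_sym mulrC.
  by rewrite sum_mul_eq1 // nbr_sym.
transitivity (\sum_(t <- nbr u) step u t * \sum_(s <- nbr v) ptrans n t s * step s v).
  by apply: eq_bigr => t _; congr (_ * _); exact: IH.
under eq_bigr do rewrite big_distrr.
rewrite exchange_big /=; apply: eq_bigr => s _; rewrite big_distrl /=.
by apply: eq_bigr => t _; rewrite mulrA.
Qed.

Lemma ptransC n u v : ptrans n u v = ptrans n v u.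
Proof.
elim: n u v => [|n IH] u v; first by rewrite /= eq_sym.
rewrite [RHS]ptransSr /= big_seq [RHS]big_seq; apply: eq_bigr => t tu.
by rewrite IH pstepC // mulrC.
Qed.

Lemma ptrans_transitive n u v : ptrans n u u = ptrans n v v.
Proof.
have [phi [phi_bij <- phi_nbr phi_w]] := vt_w u v.
suff phiE a b : ptrans n (phi a) (phi b) = ptrans n a b by rewrite phiE.
elim: n a b => [|n IH] a b; first by rewrite /= (inj_eq (bij_inj phi_bij)).
by rewrite /= sum_pstep_auto //; apply: eq_bigr => t _; rewrite IH.
Qed.

Lemma ptrans_first_passage n u v :
  ptrans n u v = \sum_(0 <= k < n.+1) hit (pred1 v) pred0 k u * ptrans (n - k) v v.
Proof.
elim: n u => [|n IH] u; first by rewrite big_nat1 /= !inE eqxx mulr1 andbT.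
have [->|uv] := eqVneq u v.
  rewrite big_nat_recl // big1 ?addr0 /=; last by move=> i _; rewrite !inE eqxx mul0r.
  by rewrite !inE eqxx mul1r.
have uA : (u \in pred1 v) || (u \in pred0) = false by rewrite !inE (negbTE uv).
rewrite [RHS]big_nat_recl // [hit _ _ 0 u]/= !inE (negbTE uv) /= mul0r add0r.
under [RHS]eq_bigr do rewrite uA /= subSS big_distrl /=.
rewrite exchange_big /=; apply: eq_bigr => t _.
by rewrite IH big_distrr /=; apply: eq_bigr => k _; rewrite mulrA.
Qed.

Lemma hitp_pred1C n u v : hit (pred1 v) pred0 n u = hit (pred1 u) pred0 n v.
Proof.
elim/ltn_ind: n => n IH.
have := ptrans_first_passage n u v; rewrite ptransC ptrans_first_passage.
under eq_bigr do rewrite (ptrans_transitive _ u v).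
rewrite !big_nat_recr //= subnn /= !eqxx /= !mulr1.
have -> : \sum_(0 <= i < n) hit (pred1 u) pred0 i v * ptrans (n - i) v v =
          \sum_(0 <= i < n) hit (pred1 v) pred0 i u * ptrans (n - i) v v.
  by apply: eq_big_nat => i /andP [_ ilt]; rewrite IH.
by move/addrI.
Qed.

Lemma PhitC u v : Phit u v = Phit v u.
Proof.
rewrite !PhitE (_ : (fun n => _) = fun n => hit (pred1 u) pred0 n v) //.
by apply/funext => n; exact: hitp_pred1C.
Qed.

Lemma Preturn_transitive u v : Preturn nbr w u = Preturn nbr w v.
Proof.
have [phi [phi_bij <- phi_nbr phi_w]] := vt_w u v.
rewrite !Preturn_sum sum_pstep_auto //; apply: eq_bigr => t _; congr (_ * _).
rewrite !PhitE (_ : (fun n => _) = fun n => hit (pred1 u) pred0 n t) //.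
apply/funext => n; apply: hitp_auto => // a.
by rewrite !inE (inj_eq (bij_inj phi_bij)).
Qed.

Lemma Phit_sqr_le_Preturn x y : x != y -> Phit x y ^+ 2 <= Preturn nbr w x.
Proof.
move=> xy; rewrite Preturn_sum expr2 {2}(Phit_step xy) big_distrr /=.
rewrite big_seq [leRHS]big_seq; apply: ler_sum => t tx.
rewrite mulrCA; apply: ler_wpM2l; first exact: pstep_ge0.
have yx : y != x by rewrite eq_sym.
rewrite (Phit_split xy t) (Phit_split yx t) (PhitC y x).
have a_ge0 := Pbefore_ge0 t x y; have h_ge0 := Phit_ge0 x y; have h_le1 := Phit_le1 x y.
have : 0 <= Pbefore t x y * (1 - Phit x y ^+ 2) by rewrite mulr_ge0 // subr_ge0 expr_le1.
nra.
Qed.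

Lemma transient_Phit_lt1 g x y : transient nbr w g -> x != y -> Phit x y < 1.
Proof.
rewrite /transient (Preturn_transitive g x) => ret_lt1 /Phit_sqr_le_Preturn.
by have := Phit_ge0 x y; nra.
Qed.

End RandomWalk.

Theorem lemma6p5 (R : realType) (V : eqType) (nbr : V -> seq V)
  (w : V -> V -> R) (e x y : V) :
  is_lf_wgraph nbr w -> vertex_transitive nbr w ->
  (Phit nbr w e y < Phit nbr w e x -> 2^-1 < Pcond nbr w e x y) /\
  (transient nbr w e ->
     (Phit nbr w e y < Phit nbr w e x <-> 2^-1 < Pcond nbr w e x y)).
Proof.
move=> lf_w vt_w; rewrite /Pcond.
have [<-|xy] := eqVneq x y.
  by rewrite Pbefore_self mul0r ltxx; split=> // _; split=> //; lra.
have yx : y != x by rewrite eq_sym.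
rewrite (Pmin_split lf_w xy) (Phit_split lf_w xy e) (Phit_split lf_w yx e).
rewrite (PhitC lf_w vt_w y x) half_lt_ratio ?Pbefore_ge0 //.
have := Pbefore_ge0 lf_w e x y; have := Pbefore_ge0 lf_w e y x.
have := Phit_ge0 lf_w x y; have := Phit_le1 lf_w x y.
split=> [|/(transient_Phit_lt1 lf_w vt_w)/(_ xy)]; nra.
Qed.
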